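(* Consider the Hecke operators $T_p$ of level $9$ acting on $\mathcal{M}(9)$, for primes $p\ne3$. Then: (a) $JT_pJ=T_p$ for all primes $p\neq3$; (b) $T_pT^{1/3}=T^{1/3}T_p$ if $p\equiv1\bmod3$; (c) $T_pT^{1/3}=T^{-1/3}T_p$ if $p\equiv2\bmod3$.
   Context: $\mathcal{M}(9)$ denotes a space of Maass cusp forms on $\Gamma_0(9)$ with fixed Laplace eigenvalue (real-analytic $\Gamma_0(9)$-invariant eigenfunctions of $-y^2(\partial_x^2+\partial_y^2)$ on the upper half-plane, vanishing at cusps, square-integrable). The Hecke operator of level $9$ is $T_n\varphi(z)=n^{-1/2}\sum_{ad=n,\,a>0,\,(a,9)=1}\sum_{b\bmod d}\varphi(\frac{az+b}{d})$. The operators $J$, $T^{1/3}$, $T^{-1/3}$ act by $(J\varphi)(z)=\varphi(-\bar z)$, $(T^{\pm1/3}\varphi)(z)=\varphi(z\pm\frac13)$ (these preserve $\mathcal{M}(9)$). *)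

From Stdlib Require Import Reals ZArith Znumtheory List Arith.
From Coquelicot Require Import Coquelicot.
Open Scope R_scope.

Definition mob (a b c d : Z) (z : C) : C :=
  Cdiv (Cplus (Cmult (RtoC (IZR a)) z) (RtoC (IZR b)))
       (Cplus (Cmult (RtoC (IZR c)) z) (RtoC (IZR d))).

Definition reP (phi : C -> C) (x y : R) : R := Re (phi (x, y)).
Definition imP (phi : C -> C) (x y : R) : R := Im (phi (x, y)).

Definition real_analytic_at (f : R -> R -> R) (x0 y0 : R) : Prop :=
  exists r : R, 0 < r /\ exists a : nat -> nat -> R,
    forall x y, Rabs (x - x0) < r -> Rabs (y - y0) < r ->
      (forall m, ex_series (fun n => Rabs (a m n) * Rabs (x - x0) ^ m * Rabs (y - y0) ^ n)) /\
      ex_series (fun m => Series (fun n => Rabs (a m n) * Rabs (x - x0) ^ m * Rabs (y - y0) ^ n)) /\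
      f x y = Series (fun m => Series (fun n => a m n * (x - x0) ^ m * (y - y0) ^ n)).

Definition real_analytic_H (f : R -> R -> R) : Prop :=
  forall x0 y0, 0 < y0 -> real_analytic_at f x0 y0.

Definition laplace_eigen (lam : R) (f : R -> R -> R) : Prop :=
  forall x y, 0 < y ->
    - (y ^ 2) * (Derive (fun s => Derive (fun t => f t y) s) x
                 + Derive (fun s => Derive (fun t => f x t) s) y) = lam * f x y.

Definition gamma0_invariant (N : Z) (phi : C -> C) : Prop :=
  forall a b c d : Z, (a * d - b * c = 1)%Z -> (N | c)%Z ->
    forall z : C, 0 < Im z -> phi (mob a b c d z) = phi z.

Definition vanishes_at_cusps (phi : C -> C) : Prop :=
  forall a b c d : Z, (a * d - b * c = 1)%Z ->
    forall eps : R, 0 < eps -> exists Y : R, forall x y : R, Y < y ->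
      Cmod (phi (mob a b c d (x, y))) < eps.

(* square-integrability on Gamma_0(N)\H w.r.t. dx dy / y^2: since Gamma_0(N)
   has finite index in SL2(Z), the quotient is covered by finitely many
   translates gamma F of the standard fundamental domain
   F = {|x| <= 1/2, x^2 + y^2 >= 1}; so we require the integral of
   |phi o gamma|^2 over F to be finite for every gamma in SL2(Z)
   (expressed as a uniform bound on the truncated integrals of the
   non-negative continuous integrand). *)
Definition square_integrable (phi : C -> C) : Prop :=
  forall a b c d : Z, (a * d - b * c = 1)%Z ->
    exists M : R, forall Y : R,
      RInt (fun x => RInt (fun y => (Cmod (phi (mob a b c d (x, y)))) ^ 2 / y ^ 2)
                          (sqrt (1 - x ^ 2)) (Rmax Y (sqrt (1 - x ^ 2))))
           (- (1 / 2)) (1 / 2) <= M.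

Definition maass_cusp_form (N : Z) (lam : R) (phi : C -> C) : Prop :=
  real_analytic_H (reP phi) /\ real_analytic_H (imP phi) /\
  gamma0_invariant N phi /\
  laplace_eigen lam (reP phi) /\ laplace_eigen lam (imP phi) /\
  vanishes_at_cusps phi /\ square_integrable phi.

Definition csum (f : nat -> C) (l : list nat) : C :=
  fold_right Cplus (RtoC 0) (map f l).

(* Hecke operator of level 9:
   T_n phi(z) = n^{-1/2} sum_{ad = n, a > 0, (a,9) = 1} sum_{b mod d} phi((a z + b)/d) *)
Definition hecke9 (n : nat) (phi : C -> C) (z : C) : C :=
  Cmult (RtoC (/ sqrt (INR n)))
    (csum (fun a =>
       if (Nat.eqb (n mod a) 0 && Nat.eqb (Nat.gcd a 9) 1)%bool then
         csum (fun b => phi (Cdiv (Cplus (Cmult (RtoC (INR a)) z) (RtoC (INR b)))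
                                  (RtoC (INR (n / a)))))
              (seq 0 (n / a))
       else RtoC 0)
     (seq 1 n)).

Definition opJ (phi : C -> C) (z : C) : C := phi (Copp (Cconj z)).

Definition transl (t : R) (phi : C -> C) (z : C) : C := phi (Cplus z (RtoC t)).

(* Only the 1-periodicity of a form on Gamma_0(9) enters.  For a prime p <> 3 the level-9
   Hecke operator is T_p phi(z) = p^(-1/2) (sum_(b < p) phi((z + b)/p) + phi(p z)), and
   t |-> phi((z + t)/p) has period p, so the sum over b only depends on b modulo p.
   Conjugating by J replaces b by -b, and translating by 1/3 shifts the residues by
   p/3 - s, where s = 1/3 if p = 1 mod 3 and s = -1/3 if p = 2 mod 3; the same choice
   of s makes p s - 1/3 an integer, which takes care of the term phi(p z). *)
From Stdlib Require Import Reals ZArith Znumtheory Lra Lia List.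
From Coquelicot Require Import Coquelicot.
Open Scope R_scope.

Section FiniteSums.
Local Open Scope C_scope.

Lemma csum_ext_in (f g : nat -> C) (l : list nat) :
  (forall b, In b l -> f b = g b) -> csum f l = csum g l.
Proof. now intros H; unfold csum; rewrite (map_ext_in f g l H). Qed.

Lemma csum_app (f : nat -> C) (l1 l2 : list nat) :
  csum f (l1 ++ l2) = csum f l1 + csum f l2.
Proof.
  unfold csum; induction l1 as [|a l1 IH]; simpl.
  - now rewrite Cplus_0_l.
  - now rewrite IH, Cplus_assoc.
Qed.

Lemma csum_seq_succ (f : nat -> C) (s n : nat) :
  csum f (seq (S s) n) = csum (fun b => f (S b)) (seq s n).
Proof. now unfold csum; rewrite <- seq_shift, map_map. Qed.

Lemma csum_seq_rev (f : nat -> C) (n : nat) :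
  csum f (seq 0 n) = csum (fun b => f (n - 1 - b)%nat) (seq 0 n).
Proof.
  induction n as [|n IH]; [reflexivity|].
  change (seq 0 (S n)) with (0%nat :: seq 1 n) at 2.
  rewrite seq_S, csum_app, IH; unfold csum at 2 3; simpl; rewrite !Nat.sub_0_r.
  fold (csum (fun b => f (n - b)%nat) (seq 1 n)).
  rewrite csum_seq_succ, Cplus_0_r, Cplus_comm.
  f_equal; apply csum_ext_in; intros b _; f_equal; lia.
Qed.

Lemma csum_eq0 (f : nat -> C) (l : list nat) :
  (forall a, In a l -> f a = 0) -> csum f l = 0.
Proof.
  unfold csum; induction l as [|a l IH]; simpl; intros H; [reflexivity|].
  now rewrite H, IH, Cplus_0_l by auto.
Qed.

End FiniteSums.

Definition periodic_with (n : nat) (G : R -> C) : Prop :=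
  forall t : R, G (t + INR n)%R = G t.

Lemma csum_periodic_shift1 (G : R -> C) (n : nat) : periodic_with n G ->
  csum (fun b => G (INR b + 1)%R) (seq 0 n) = csum (fun b => G (INR b)) (seq 0 n).
Proof.
  intros HG; destruct n as [|m]; [reflexivity|].
  rewrite (csum_ext_in _ (fun b => G (INR (S b))))
    by (intros b _; rewrite S_INR; reflexivity).
  rewrite <- (csum_seq_succ (fun b => G (INR b))), seq_S, csum_app.
  change (1 + m)%nat with (S m).
  change (seq 0 (S m)) with (0%nat :: seq 1 m); unfold csum at 2 3; cbn [map fold_right].
  replace (INR (S m)) with (0 + INR (S m))%R by ring.
  now rewrite HG, Cplus_0_r, Cplus_comm.
Qed.

Lemma csum_periodic_shift_nat (G : R -> C) (n k : nat) : periodic_with n G ->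
  csum (fun b => G (INR b + INR k)%R) (seq 0 n) = csum (fun b => G (INR b)) (seq 0 n).
Proof.
  revert G; induction k as [|k IH]; intros G HG.
  - now apply csum_ext_in; intros b _; rewrite Rplus_0_r.
  - rewrite <- (IH G HG), <- (csum_periodic_shift1 (fun t => G (t + INR k)%R) n).
    + now apply csum_ext_in; intros b _; rewrite S_INR, Rplus_assoc, (Rplus_comm 1).
    + now intros t; rewrite Rplus_assoc, (Rplus_comm (INR n)), <- Rplus_assoc, HG.
Qed.

Lemma csum_periodic_shift (G : R -> C) (n : nat) (m : Z) : periodic_with n G ->
  csum (fun b => G (INR b + IZR m)%R) (seq 0 n) = csum (fun b => G (INR b)) (seq 0 n).
Proof.
  intros HG; destruct (Z.le_ge_cases 0 m) as [Hm|Hm].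
  - now rewrite <- (Z2Nat.id m Hm), <- INR_IZR_INZ, csum_periodic_shift_nat.
  - set (k := Z.to_nat (- m)).
    assert (Em : IZR m = (- INR k)%R).
    { unfold k; rewrite INR_IZR_INZ, Z2Nat.id, opp_IZR by lia; ring. }
    rewrite (csum_ext_in _ (fun b => G (INR b - INR k)%R))
      by (intros b _; rewrite Em; reflexivity).
    rewrite <- (csum_periodic_shift_nat (fun t => G (t - INR k)%R) n k).
    + now apply csum_ext_in; intros b _; f_equal; ring.
    + intros t; unfold Rminus.
      now rewrite Rplus_assoc, (Rplus_comm (INR n)), <- Rplus_assoc, HG.
Qed.

Lemma csum_periodic_reflect (G : R -> C) (n : nat) : periodic_with n G ->
  csum (fun b => G (- INR b)%R) (seq 0 n) = csum (fun b => G (INR b)) (seq 0 n).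
Proof.
  intros HG; rewrite csum_seq_rev, <- (csum_periodic_shift1 G n HG).
  apply csum_ext_in; intros b Hb; apply in_seq in Hb.
  rewrite <- HG, !minus_INR by lia; f_equal; simpl; ring.
Qed.

Section Periodicity.
Local Open Scope C_scope.

Definition int_periodic (phi : C -> C) : Prop :=
  forall (m : Z) (z : C), (0 < Im z)%R -> phi (z + IZR m) = phi z.

Lemma gamma0_invariant_int_periodic (N : Z) (phi : C -> C) :
  gamma0_invariant N phi -> int_periodic phi.
Proof.
  intros H m z Hz; rewrite <- (H 1%Z m 0%Z 1%Z ltac:(lia) (Z.divide_0_r N) z Hz).
  now unfold mob; f_equal; simpl IZR; field.
Qed.

Lemma RtoC_neq0 (r : R) : r <> 0%R -> RtoC r <> 0.
Proof. intros Hr E; apply Hr; now injection E. Qed.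

Lemma Im_div_real (w : C) (r : R) : r <> 0%R -> Im (w / r) = (Im w / r)%R.
Proof. now intros Hr; unfold Cdiv; rewrite <- RtoC_inv, im_scal_r by exact Hr. Qed.

Lemma int_periodic_rescaled (phi : C -> C) (z : C) (p : nat) :
  int_periodic phi -> (0 < Im z)%R -> (0 < INR p)%R ->
  periodic_with p (fun t => phi ((z + t) / INR p)).
Proof.
  intros Hphi Hz Hp t.
  replace ((z + (t + INR p)%R) / INR p) with ((z + t) / INR p + IZR 1)
    by (simpl IZR; rewrite RtoC_plus; field; apply RtoC_neq0; lra).
  apply Hphi; rewrite Im_div_real, im_plus by lra; simpl.
  apply Rdiv_lt_0_compat; lra.
Qed.

End Periodicity.

Lemma Nat_divide_Z (a p : nat) : Nat.divide a p -> (Z.of_nat a | Z.of_nat p)%Z.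
Proof. intros [k Hk]; exists (Z.of_nat k); subst; lia. Qed.

Lemma prime_gcd_9 (p : nat) : prime (Z.of_nat p) -> p <> 3%nat -> Nat.gcd p 9 = 1%nat.
Proof.
  intros hp hp3; pose proof (prime_ge_2 _ hp) as H2.
  destruct (prime_divisors _ hp _ (Nat_divide_Z _ _ (Nat.gcd_divide_l p 9)))
    as [E|[E|[E|E]]]; try lia.
  exfalso; apply hp3.
  pose proof (Nat_divide_Z _ _ (Nat.gcd_divide_r p 9)) as Hp9; rewrite E in Hp9.
  change (Z.of_nat 9) with (3 * 3)%Z in Hp9.
  enough (Z.of_nat p = 3%Z) by lia.
  now apply prime_div_prime; [| exact prime_3 |]; destruct (prime_mult _ hp _ _ Hp9).
Qed.

Lemma prime_mod_neq0 (p a : nat) :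
  prime (Z.of_nat p) -> (2 <= a < p)%nat -> (p mod a <> 0)%nat.
Proof.
  intros hp Ha E; apply Nat.Lcm0.mod_divide, Nat_divide_Z in E.
  destruct (prime_divisors _ hp _ E) as [E'|[E'|[E'|E']]]; lia.
Qed.

Section HeckePrime.
Local Open Scope C_scope.

Lemma hecke9_prime (p : nat) (psi : C -> C) (z : C) :
  prime (Z.of_nat p) -> Nat.gcd p 9 = 1%nat ->
  hecke9 p psi z = RtoC (/ sqrt (INR p))
    * (csum (fun b => psi ((z + INR b) / INR p)) (seq 0 p) + psi (INR p * z)).
Proof.
  intros hp Hg; pose proof (prime_ge_2 _ hp) as H2.
  unfold hecke9; f_equal.
  destruct p as [|[|m]]; try lia.
  change (seq 1 (S (S m))) with ((1%nat :: nil) ++ seq 2 (S m)).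
  rewrite (seq_S m 2); change (2 + m)%nat with (S (S m)).
  rewrite !csum_app, (csum_eq0 _ (seq 2 m)).
  2:{ intros a Ha; apply in_seq in Ha.
      now rewrite (proj2 (Nat.eqb_neq _ 0) (prime_mod_neq0 _ a hp ltac:(lia))). }
  unfold csum at 1 3; cbn [map fold_right].
  rewrite Nat.mod_1_r, Nat.div_1_r, Nat.Div0.mod_same, Nat.div_same, Hg by lia.
  cbn [Nat.eqb andb Nat.gcd seq]; unfold csum at 2; cbn [map fold_right].
  rewrite !Cplus_0_r, Cplus_0_l; f_equal.
  - apply csum_ext_in; intros b _; f_equal; simpl INR; now rewrite Cmult_1_l.
  - f_equal; simpl INR; field.
Qed.

Lemma reflect_div_real (z : C) (b q : R) : q <> 0%R ->
  Copp (Cconj ((Copp (Cconj z) + b) / q)) = (z + (- b)%R) / q.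
Proof.
  intros Hq; destruct z as [x y].
  unfold Cdiv, Cinv, Cmult, Cplus, Copp, Cconj, RtoC; simpl; f_equal; field; lra.
Qed.

Lemma reflect_mult_real (z : C) (q : R) : Copp (Cconj (q * Copp (Cconj z))) = q * z.
Proof.
  destruct z as [x y]; unfold Cmult, Copp, Cconj, RtoC; simpl; f_equal; ring.
Qed.

Lemma hecke9_prime_opJ (phi : C -> C) (p : nat) (z : C) :
  int_periodic phi -> prime (Z.of_nat p) -> Nat.gcd p 9 = 1%nat -> (0 < Im z)%R ->
  opJ (hecke9 p (opJ phi)) z = hecke9 p phi z.
Proof.
  intros Hphi hp Hg Hz.
  assert (Hp : (0 < INR p)%R) by (apply lt_0_INR; pose proof (prime_ge_2 _ hp); lia).
  unfold opJ; rewrite !hecke9_prime by auto.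
  rewrite reflect_mult_real; do 2 f_equal.
  rewrite (csum_ext_in _ (fun b => phi ((z + (- INR b)%R) / INR p)))
    by (intros b _; now rewrite reflect_div_real by lra).
  now apply (csum_periodic_reflect (fun t => phi ((z + t) / INR p))), int_periodic_rescaled.
Qed.

Lemma hecke9_prime_transl (phi : C -> C) (p : nat) (t s : R) (m k : Z) :
  int_periodic phi -> prime (Z.of_nat p) -> Nat.gcd p 9 = 1%nat ->
  (INR p * t = s + IZR m)%R -> (t = INR p * s + IZR k)%R ->
  forall z, (0 < Im z)%R -> hecke9 p (transl t phi) z = transl s (hecke9 p phi) z.
Proof.
  intros Hphi hp Hg Hm Hk z Hz.
  assert (Hp : (0 < INR p)%R) by (apply lt_0_INR; pose proof (prime_ge_2 _ hp); lia).
  assert (Hzs : (0 < Im (z + s))%R) by now rewrite im_plus, im_RtoC, Rplus_0_r.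
  unfold transl; rewrite !hecke9_prime by auto; do 2 f_equal.
  - rewrite (csum_ext_in _ (fun b => phi ((z + s + (INR b + IZR m)%R) / INR p))).
    + now apply (csum_periodic_shift (fun u => phi ((z + s + u) / INR p))),
        int_periodic_rescaled.
    + intros b _; f_equal.
      replace t with ((s + IZR m) / INR p)%R by (field_simplify_eq; lra).
      rewrite RtoC_div, !RtoC_plus by lra; field; apply RtoC_neq0; lra.
  - rewrite Hk, RtoC_plus, <- (Hphi k (INR p * (z + s))).
    + f_equal; rewrite RtoC_mult; ring.
    + rewrite im_scal_l; now apply Rmult_lt_0_compat.
Qed.

End HeckePrime.

Theorem lemma6p1 (lam : R) (phi : C -> C) (Hphi : maass_cusp_form 9%Z lam phi)
  (p : nat) (hp : prime (Z.of_nat p)) (hp3 : p <> 3%nat) :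
  (forall z : C, 0 < Im z -> opJ (hecke9 p (opJ phi)) z = hecke9 p phi z) /\
  ((p mod 3 = 1)%nat -> forall z : C, 0 < Im z ->
      hecke9 p (transl (1 / 3) phi) z = transl (1 / 3) (hecke9 p phi) z) /\
  ((p mod 3 = 2)%nat -> forall z : C, 0 < Im z ->
      hecke9 p (transl (1 / 3) phi) z = transl (- (1 / 3)) (hecke9 p phi) z).
Proof.
  destruct Hphi as (_ & _ & Hinv & _).
  pose proof (gamma0_invariant_int_periodic _ _ Hinv) as Hper.
  pose proof (prime_gcd_9 p hp hp3) as Hg.
  set (k := (p / 3)%nat).
  assert (Hp : INR p = 3 * IZR (Z.of_nat k) + INR (p mod 3)).
  { replace 3 with (INR 3) by (simpl; ring).
    now unfold k; rewrite <- INR_IZR_INZ, <- mult_INR, <- plus_INR, <- Nat.div_mod_eq. }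
  split; [|split].
  - intros z Hz; now apply hecke9_prime_opJ.
  - intros Hmod; rewrite Hmod in Hp; simpl INR in Hp.
    apply (hecke9_prime_transl _ _ _ _ (Z.of_nat k) (- Z.of_nat k)); auto;
      rewrite ?opp_IZR; lra.
  - intros Hmod; rewrite Hmod in Hp; simpl INR in Hp.
    apply (hecke9_prime_transl _ _ _ _ (Z.of_nat k + 1) (Z.of_nat k + 1)); auto;
      rewrite plus_IZR; lra.
Qed.
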